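(* Let $(A,B)$ be a regular pair with $A,B\in\mathbb{C}^{n\times n}$, and let $C,D\in\mathbb{C}^{n\times n}$ be such that $[C,D]\in\mathbb{C}^{n\times2n}$ has full row rank and $CA+DB=0$. Then the pair $(D,C)$ is regular.
   Context: A pair $(A,B)$ of square matrices is regular if $\det(A-\lambda B)\neq0$ for some $\lambda\in\mathbb{C}$. *)

From HB Require Import structures.
From mathcomp Require Import all_boot all_order all_algebra.
From mathcomp Require Import complex.
From mathcomp Require Import reals.
Set Implicit Arguments. Unset Strict Implicit. Unset Printing Implicit Defensive.
Import GRing.Theory Num.Theory.
Local Open Scope ring_scope.

Definition regular_pair (F : comNzRingType) (n : nat) (A B : 'M[F]_n) : Prop :=
  exists lambda : F, \det (A - lambda *: B) != 0.

From HB Require Import structures.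
From mathcomp Require Import all_boot all_order all_algebra.
From mathcomp Require Import complex.
From mathcomp Require Import reals.
Import GRing.Theory Num.Theory.
Local Open Scope ring_scope.
Local Open Scope complex_scope.

(* Pick l with E := A - l B invertible.  The relation C A + D B = 0 rewrites
   as C E = - (D + l C) B, so [C, D] = (D + l C) [- B E^-1, I + l B E^-1].
   As [C, D] has full row rank n, the n x n factor D + l C = D - (- l) C
   must be invertible. *)

Lemma row_free_mulmxl (F : fieldType) [m p k] [M : 'M[F]_(m, p)] [N : 'M_(p, k)] :
  row_free (M *m N) -> row_free M.
Proof.
by move=> /eqP hMN; rewrite /row_free eqn_leq rank_leq_row -{1}hMN mxrankM_maxl.
Qed.

Section RegularPencil.
Variables (F : fieldType) (n : nat).
Implicit Types A B C D : 'M[F]_n.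

Lemma regular_pairP A B : regular_pair A B <-> exists l, A - l *: B \in unitmx.
Proof. by split=> -[l hl]; exists l; move: hl; rewrite unitmxE unitfE. Qed.

Lemma row_mx_pencil_factor [A B C D] [l : F] :
  A - l *: B \in unitmx -> C *m A + D *m B = 0 ->
  let G := B *m invmx (A - l *: B) in
  row_mx C D = (D + l *: C) *m row_mx (- G) (1%:M + l *: G).
Proof.
move=> El hCD G; set D' := D + l *: C.
have hCE : C *m (A - l *: B) = - (D' *m B).
  rewrite mulmxBr mulmxDl -!scalemxAl -scalemxAr.
  by apply/eqP; rewrite -subr_eq0 opprK addrACA addNr addr0 hCD.
have hC : C = - (D' *m G).
  by rewrite mulmxA -mulNmx -hCE -mulmxA mulmxV // mulmx1.
have hD : D = D' *m (1%:M + l *: G).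
  by rewrite mulmxDr mulmx1 -scalemxAr -[D' *m G]opprK -hC scalerN addrK.
by rewrite mul_mx_row mulmxN -hC -hD.
Qed.

Lemma regular_pair_left_kernel A B C D :
  regular_pair A B -> row_free (row_mx C D) -> C *m A + D *m B = 0 ->
  regular_pair D C.
Proof.
move=> /regular_pairP [l El] hfree hCD; apply/regular_pairP; exists (- l).
rewrite scaleNr opprK -row_free_unit.
by move: hfree; rewrite (row_mx_pencil_factor El hCD); apply: row_free_mulmxl.
Qed.

End RegularPencil.

Theorem lemma3p4 (R : realType) (n : nat) (A B C D : 'M[R[i]]_n) :
  regular_pair A B ->
  \rank (row_mx C D) = n ->
  C *m A + D *m B = 0 ->
  regular_pair D C.
Proof.
move=> hAB /eqP hfree; exact: regular_pair_left_kernel.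
Qed.
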